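(* For every $n\ge1$, $$\left(h_{j-i}(X_j,X_{j+1},\dots,X_n)\right)_{1\le i,j\le n}\cdot\left(h_{1-i-j}(X_1,\dots,X_i)\right)_{1\le i,j\le n}=\left(h_{1-i-j}(X_1,\dots,X_n)\right)_{1\le i,j\le n}.$$
   Context: Extended complete homogeneous symmetric functions: for $k\ge0$, $h_k(X_1,\dots,X_m)=\sum_{l_1+\dots+l_m=k,\ l_i\ge0}X_1^{l_1}\cdots X_m^{l_m}$; for $k<0$, $h_k(X_1,\dots,X_m)=(-1)^{m+1}\sum_{l_1+\dots+l_m=k,\ l_i<0}X_1^{l_1}\cdots X_m^{l_m}$. *)

From mathcomp Require Import all_boot all_order all_algebra.
Set Implicit Arguments. Unset Strict Implicit. Unset Printing Implicit Defensive.
Import Order.TTheory GRing.Theory Num.Theory.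
Local Open Scope ring_scope.

(* Extended complete homogeneous symmetric function h_k(s_0,...,s_{m-1}),
   m = size s, k : int.
   k >= 0 : sum over l : 'I_m -> nat with sum l = k of prod s_i^(l_i).
            (each l_i <= k, so l ranges over {ffun 'I_m -> 'I_(k+1)}).
   k < 0  : (-1)^(m+1) * sum over exponents l_i = - a_i with a_i >= 1,
            sum a_i = -k, of prod s_i^(-a_i)   (each a_i <= |k|). *)
Definition hext (R : unitRingType) (k : int) (s : seq R) : R :=
  let m := size s in
  if (0 <= k)%R then
    \sum_(l : {ffun 'I_m -> 'I_(`|k|%N.+1)} | (\sum_(i < m) (l i : nat))%N == `|k|%N)
       \prod_(i < m) s`_i ^+ (l i)
  else
    (-1) ^+ m.+1 *
    \sum_(l : {ffun 'I_m -> 'I_(`|k|%N.+1)} |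
            ((\sum_(i < m) (l i : nat))%N == `|k|%N) && [forall i, (0 < l i)%N])
       \prod_(i < m) s`_i ^- (l i).

From mathcomp Require Import all_boot all_order all_algebra.
From mathcomp Require Import ring zify.
Set Implicit Arguments. Unset Strict Implicit. Unset Printing Implicit Defensive.
Import Order.TTheory GRing.Theory Num.Theory.
Local Open Scope ring_scope.

(* Both signs of degree are sums over compositions of |k| weighted by a
   function of each part (x^a, resp. x^-a with a >= 1).  Reading such sums
   as coefficients of a product of truncated generating polynomials gives
   the recursion on the last variable (comp_sum_rcons).  From it we derive:
   - h_N(s, y) = sum_b y^b h_{N-b}(s) for N >= 0;
   - h_k(s, y) = h_k(s) + y h_{k-1}(s, y) for k < 0 (y invertible), iterated;
   - h_k(s) = 0 when k < 0 and |k| < size s, which kills the strictly lower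
     part of the upper triangular factor.
   The entry (i, c) of the product is then a triangular sum, evaluated by
   induction on n: expanding h_{j-i}(X_j,...,X_n) in powers of X_n,
   exchanging the two sums and applying the induction hypothesis yields
   exactly the iterated negative-degree recursion in the variable X_n. *)

Section Compositions.
Variable R : comNzRingType.

Definition comp_sum (f : R -> nat -> R) (s : seq R) (N : nat) : R :=
  \sum_(l : {ffun 'I_(size s) -> 'I_N.+1} | (\sum_(i < size s) (l i : nat))%N == N)
     \prod_(i < size s) f s`_i (l i).

Lemma comp_sum_coef f s N :
  comp_sum f s N = (\prod_(i < size s) \poly_(a < N.+1) f s`_i a)`_N.
Proof.
under eq_bigr do rewrite poly_def.
rewrite bigA_distr_bigA /= coef_sum /comp_sum [LHS]big_mkcond /=.
apply: eq_bigr => l _.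
rewrite scaler_prod prodrXr coefZ coefXn eq_sym.
by case: eqP; rewrite ?mulr1 ?mulr0.
Qed.

Lemma coef_prod_agree (I : Type) (r : seq I) (p q : I -> {poly R}) (M : nat) :
    (forall i k, (k <= M)%N -> (p i)`_k = (q i)`_k) ->
  forall k, (k <= M)%N -> (\prod_(i <- r) p i)`_k = (\prod_(i <- r) q i)`_k.
Proof.
move=> pq; elim/big_rec2: _ => [//|i a b _ ab] k kM.
rewrite !coefM; apply: eq_bigr => j _.
have jk : (j <= k)%N := leq_ord j.
by rewrite pq ?ab ?(leq_trans jk kM) ?(leq_trans (leq_subr j k) kM).
Qed.

Lemma comp_sum_rcons f s y N :
  comp_sum f (rcons s y) N = \sum_(b < N.+1) f y b * comp_sum f s (N - b).
Proof.
rewrite comp_sum_coef size_rcons big_ord_recr /= mulrC coefM.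
apply: eq_bigr => b _.
rewrite coef_poly ltn_ord nth_rcons ltnn eqxx comp_sum_coef; congr (_ * _).
apply: (@coef_prod_agree _ _ _ _ (N - b)) => // i k kN.
by rewrite /= nth_rcons ltn_ord !coef_poly !ltnS kN (leq_trans kN (leq_subr _ _)).
Qed.

Lemma comp_sum_nil f N : comp_sum f [::] N = (N == 0)%:R.
Proof. by rewrite comp_sum_coef big_ord0 coef1. Qed.

End Compositions.

Section ExtendedH.
Variable R : comUnitRingType.

Definition pow_weight (x : R) (a : nat) : R := x ^+ a.
Definition invpow_weight (x : R) (a : nat) : R := if (0 < a)%N then x ^- a else 0.

Lemma hext_nat N (s : seq R) : hext (Posz N) s = comp_sum pow_weight s N.
Proof. by []. Qed.

Lemma hext_negz K (s : seq R) :
  hext (Negz K) s = (-1) ^+ (size s).+1 * comp_sum invpow_weight s K.+1.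
Proof.
rewrite /hext /=; congr (_ * _).
rewrite /comp_sum big_mkcondr /=; apply: eq_bigr => l _.
case: ifP => [/forallP l_pos|/negbT].
  by apply: eq_bigr => i _; rewrite /invpow_weight l_pos.
rewrite negb_forall => /existsP [i li0].
by rewrite (bigD1 i) //= /invpow_weight (negbTE li0) mul0r.
Qed.

Lemma hext_nat_nil N : hext (Posz N) ([::] : seq R) = (N == 0)%:R.
Proof. by rewrite hext_nat comp_sum_nil. Qed.

Lemma hext_nat_rcons (s : seq R) y N :
  hext (Posz N) (rcons s y) = \sum_(b < N.+1) y ^+ b * hext (Posz (N - b)) s.
Proof. by rewrite !hext_nat comp_sum_rcons. Qed.

Lemma hext_nat_single (y : R) N : hext (Posz N) [:: y] = y ^+ N.
Proof.
rewrite -[[:: y]]/(rcons [::] y) hext_nat_rcons big_ord_recr /=.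
rewrite subnn hext_nat_nil mulr1 big1 ?add0r // => b _.
by rewrite hext_nat_nil subn_eq0 leqNgt ltn_ord mulr0.
Qed.

(* h_k(s) = 0 for -size s < k < 0: a composition of -k into size s positive
   parts cannot exist. *)
Lemma hext_negz_vanish (s : seq R) K : (K.+1 < size s)%N -> hext (Negz K) s = 0.
Proof.
move=> Ks; rewrite hext_negz /comp_sum big1 ?mulr0 // => l /eqP suml.
have [i /eqP li0 | l_pos] := pickP [pred i | (l i : nat) == 0%N].
  by rewrite (bigD1 i) //= /invpow_weight li0 mul0r.
have : (\sum_(i < size s) 1 <= \sum_(i < size s) l i)%N.
  by apply: leq_sum => i _; rewrite lt0n; apply/negbT/l_pos.
by rewrite sum1_card card_ord suml leqNgt Ks.
Qed.

Lemma invpow_weightS (y : R) (b : nat) : y \is a GRing.unit ->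
  y * invpow_weight y b.+2 = invpow_weight y b.+1.
Proof.
by move=> yU; rewrite /invpow_weight /= exprS invrM ?unitrX // mulrCA mulrV ?mulr1.
Qed.

(* Multiplying by y shifts the exponent of y by one; the part of size one in
   y becomes the term where y is dropped. *)
Lemma comp_sum_invpow_rcons (s : seq R) y K : y \is a GRing.unit ->
  y * comp_sum invpow_weight (rcons s y) K.+2
  = comp_sum invpow_weight (rcons s y) K.+1 + comp_sum invpow_weight s K.+1.
Proof.
move=> yU; rewrite !comp_sum_rcons big_ord_recl [X in _ = X + _]big_ord_recl.
rewrite {1 3}/invpow_weight /= !mul0r !add0r mulr_sumr big_ord_recl /=.
rewrite mulrA {1}/invpow_weight /= expr1 mulrV // mul1r addrC; congr (_ + _).
by apply: eq_bigr => b _; rewrite /bump /= !add1n !subSS mulrA invpow_weightS.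
Qed.

Lemma hext_negz_rcons (s : seq R) y K : y \is a GRing.unit ->
  hext (Negz K) (rcons s y) = hext (Negz K) s + y * hext (Negz K.+1) (rcons s y).
Proof.
move=> yU; rewrite !hext_negz size_rcons mulrCA comp_sum_invpow_rcons // exprS.
ring.
Qed.

Lemma hext_negz_rcons_iter (s : seq R) y K B : y \is a GRing.unit ->
  hext (Negz K) (rcons s y) =
  \sum_(b < B) y ^+ b * hext (Negz (K + b)) s + y ^+ B * hext (Negz (K + B)) (rcons s y).
Proof.
move=> yU; elim: B => [|B IH]; first by rewrite big_ord0 add0r mul1r addn0.
rewrite IH (@hext_negz_rcons s y (K + B) yU) big_ord_recr /=.
by rewrite mulrDr addrA mulrA -exprSr addnS.
Qed.

End ExtendedH.

(* Exchange of a triangular double sum: the pairs (j, b) with i <= j < n and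
   b <= j - i are also described by b < n - i and i + b <= j < n. *)
Lemma exchange_big_triangle (V : nmodType) (F : nat -> nat -> V) (i n : nat) :
  (i <= n)%N ->
  \sum_(i <= j < n) \sum_(b < (j - i).+1) F j b
  = \sum_(b < n - i) \sum_(i + b <= j < n) F j b.
Proof.
elim: n => [|n IH] i_n; first by rewrite big_geq // sub0n big_ord0.
have [n_i | i_le_n] := ltnP n i.
  have -> : i = n.+1 by apply/eqP; rewrite eqn_leq i_n n_i.
  by rewrite big_geq // subnn big_ord0.
have split_last_j (b : 'I_(n - i).+1) :
    \sum_(i + b <= j < n.+1) F j b = \sum_(i + b <= j < n) F j b + F n b.
  by rewrite big_nat_recr //; have := ltn_ord b; lia.
rewrite big_nat_recr //= subSn // (eq_bigr _ (fun b _ => split_last_j b)).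
rewrite big_split /= IH //; congr (_ + _).
by rewrite big_ord_recr /= big_geq ?addr0 // subnKC.
Qed.

Section Factorization.
Variables (R : comUnitRingType) (X : nat -> R).

Definition vars (a b : nat) : seq R := [seq X k | k <- iota a (b - a)].

Lemma vars0 n : vars 0 n = [seq X k | k <- iota 0 n].
Proof. by rewrite /vars subn0. Qed.

Lemma vars_rcons a b : (a <= b)%N -> vars a b.+1 = rcons (vars a b) (X b).
Proof.
by move=> ab; rewrite /vars subSn // -addn1 iotaD subnKC // cats1 map_rcons.
Qed.

Lemma hext_vars_expand i j m : (i <= j < m)%N ->
  hext (Posz (j - i)) (vars j m.+1)
  = \sum_(b < (j - i).+1) X m ^+ b * hext (Posz (j - (i + b))) (vars j m).
Proof.
case/andP => _ jm; rewrite vars_rcons ?(ltnW jm) // hext_nat_rcons.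
by under eq_bigr do rewrite -subnDA.
Qed.

Lemma hext_upper_lower_sum n i c :
  (forall k, (k < n)%N -> X k \is a GRing.unit) -> (i < n)%N ->
  \sum_(i <= j < n) hext (Posz (j - i)) (vars j n) * hext (Negz (j + c)) (vars 0 j.+1)
  = hext (Negz (i + c)) (vars 0 n).
Proof.
elim: n i => [//|m IH] i XU im; rewrite ltnS in im.
have XU' k : (k < m)%N -> X k \is a GRing.unit by move=> km; apply/XU/leqW.
have last_var : vars m m.+1 = [:: X m] by rewrite /vars subSn // subnn.
rewrite big_nat_recr //= last_var hext_nat_single vars_rcons //.
rewrite [RHS](@hext_negz_rcons_iter _ _ _ _ (m - i) (XU m _)) //.
rewrite (_ : i + c + (m - i) = m + c)%N; last by lia.
congr (_ + _).
under eq_big_nat => j ijm do rewrite hext_vars_expand // mulr_suml.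
pose T j b := X m ^+ b * hext (j - (i + b))%N (vars j m) * hext (Negz (j + c)) (vars 0 j.+1).
rewrite (exchange_big_triangle T im); apply: eq_bigr => b _.
rewrite -addnAC -(IH (i + b) XU'); last by have := ltn_ord b; lia.
by rewrite mulr_sumr; apply: eq_bigr => j _; rewrite mulrA.
Qed.

Lemma hext_vars_below_diag n i j : (j < i < n)%N -> hext (j%:Z - i%:Z) (vars j n) = 0.
Proof.
case/andP => ji i_n; rewrite (_ : j%:Z - i%:Z = Negz (i - j.+1)); last by rewrite NegzE; lia.
by apply: hext_negz_vanish; rewrite size_map size_iota; lia.
Qed.

Lemma product_entry n i c :
  (forall k, (k < n)%N -> X k \is a GRing.unit) -> (i < n)%N ->
  \sum_(j < n) hext (j%:Z - i%:Z) (vars j n) * hext (Negz (j + c)) (vars 0 j.+1)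
  = hext (Negz (i + c)) (vars 0 n).
Proof.
move=> XU i_n.
pose F j := hext (j%:Z - i%:Z) (vars j n) * hext (Negz (j + c)) (vars 0 j.+1).
rewrite -(big_mkord xpredT F) (big_cat_nat _ (ltnW i_n)) //=.
rewrite big_nat_cond big1 ?add0r => [|j /andP[/andP[_ ji] _]]; last first.
  by rewrite /F hext_vars_below_diag ?ji ?mul0r.
rewrite -(hext_upper_lower_sum c XU i_n); apply: eq_big_nat => j /andP[ij _].
by rewrite /F subzn.
Qed.

End Factorization.

Lemma column_index (a b : nat) : (-1 - a%:Z - b%:Z = Negz (a + b))%R.
Proof. by rewrite NegzE; lia. Qed.

Theorem mainTheorem13 (R : comUnitRingType) (n : nat) (X : nat -> R)
    (hn : (0 < n)%N) (hX : forall k, (k < n)%N -> X k \is a GRing.unit) :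
  (\matrix_(i < n, j < n)
      hext ((j : int) - (i : int)) [seq X k | k <- iota j (n - j)])
  *m
  (\matrix_(i < n, j < n)
      hext (- 1 - (i : int) - (j : int)) [seq X k | k <- iota 0 i.+1])
  =
  \matrix_(i < n, j < n)
      hext (- 1 - (i : int) - (j : int)) [seq X k | k <- iota 0 n].
Proof.
apply/matrixP => i c; rewrite !mxE column_index -vars0.
under eq_bigr => j _ do rewrite !mxE column_index -vars0.
exact: product_entry c hX (ltn_ord i).
Qed.
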